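(* Let $N\geq 4$ and let $\Gamma$ be the graph obtained from the cycle graph $C_N$ by adding one edge (a chord) $\{n,m\}$ between two vertices that are not adjacent in $C_N$. Then $\mathcal C^N(\Gamma)=0$. (Consequently, under the entropy model $S(Q)=\alpha L(Q)-J(Q)\log\mathcal D$ the $N$-partite information of the whole collection vanishes, while each of the two cycles created by the chord, if it has at least $3$ vertices, is itself a cycle graph for which $\mathcal C=2(-1)^{p-1}$, $p$ its number of vertices.)
   Context: Let $\Gamma$ be a finite simple graph with vertex set $[N]$ (vertices model planar subsystems, edges model shared walls/handles, each cycle encloses a hole). For nonempty $Q\subseteq[N]$ let $\Gamma[Q]$ be the induced subgraph, $c(Q)$ its number of connected components, $e(Q)$ its number of edges, $b_1(Q)=e(Q)-|Q|+c(Q)$. Define $J(Q)=c(Q)+b_1(Q)$ (number of boundary components of the union of the subsystems in $Q$) and $\mathcal C^N(\Gamma)=\sum_{\emptyset\neq Q\subseteq[N]}(-1)^{|Q|-1}J(Q)$. $C_N$ has edges $\{i,i+1\bmod N\}$. *)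

From mathcomp Require Import all_boot all_order all_algebra.
Set Implicit Arguments. Unset Strict Implicit. Unset Printing Implicit Defensive.
Import GRing.Theory Num.Theory.

(* A finite simple graph on vertex set [N] = 'I_N is given by a
   symmetric irreflexive adjacency relation. *)

Definition induced_rel N (adj : rel 'I_N) (Q : {set 'I_N}) : rel 'I_N :=
  fun x y => [&& x \in Q, y \in Q & adj x y].

Definition ncomp N (adj : rel 'I_N) (Q : {set 'I_N}) : nat :=
  #|[set [set y in Q | connect (induced_rel adj Q) x y] | x in Q]|.

Definition nedges N (adj : rel 'I_N) (Q : {set 'I_N}) : nat :=
  #|[set p : 'I_N * 'I_N | [&& p.1 < p.2, p.1 \in Q, p.2 \in Q & adj p.1 p.2]]|.

Definition betti1 N (adj : rel 'I_N) (Q : {set 'I_N}) : int :=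
  (nedges adj Q)%:Z - (#|Q|)%:Z + (ncomp adj Q)%:Z.

Definition Jbd N (adj : rel 'I_N) (Q : {set 'I_N}) : int :=
  (ncomp adj Q)%:Z + betti1 adj Q.

Definition calC N (adj : rel 'I_N) : int :=
  \sum_(Q : {set 'I_N} | Q != set0) (-1) ^+ (#|Q|.-1) * Jbd adj Q.

Definition cycle_adj N : rel 'I_N :=
  fun i j => (val j == (val i).+1 %% N) || (val i == (val j).+1 %% N).

Definition chord_adj N (n m : 'I_N) : rel 'I_N :=
  fun i j => [|| cycle_adj i j, (i == n) && (j == m) | (i == m) && (j == n)].

From mathcomp Require Import all_boot all_order all_algebra.
From mathcomp Require Import zify ring.
Import GRing.Theory Num.Theory.
Set Implicit Arguments. Unset Strict Implicit. Unset Printing Implicit Defensive.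

(* For a proper subset A of the vertices, the signed count of the sets Q
   containing A vanishes.  Since |Q| and e(Q) are sums of such indicators
   (over vertices, resp. edges) once N >= 3, C^N(Gamma) = -2 sum_Q (-1)^|Q| c(Q).
   Build the chorded cycle from the edgeless graph by adding the path edges
   {k, k+1}, then the chord {n, m}, then the closing edge {0, N-1}.  Adding an
   edge {x, y} lowers c(Q) by one exactly when x, y lie in Q but in different
   components.  For a path edge this is the indicator of {x, y} in Q; for the
   chord it is [{n, m} in Q] - [[n, m] in Q]; for the closing edge it is
   [{0, N-1} in Q] - [[0, n] u [m, N-1] in Q].  Because the chord joins
   non-adjacent vertices, all these sets are proper, so every step leaves the
   alternating component count equal to 0. *)

Section AlternatingSums.
Local Open Scope ring_scope.
Variable T : finType.

Definition toggle (z : T) (Q : {set T}) : {set T} :=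
  if z \in Q then Q :\ z else z |: Q.

Lemma toggleK z : involutive (toggle z).
Proof.
move=> Q; rewrite /toggle; have [zQ|zQ] := boolP (z \in Q).
  by rewrite setD11 setD1K.
by rewrite setU11 setU1K.
Qed.

Lemma card_toggle z Q : #|toggle z Q| = if z \in Q then #|Q|.-1 else #|Q|.+1.
Proof.
rewrite /toggle; case: ifP => zQ; last by rewrite cardsU1 zQ.
by rewrite -[in RHS](setD1K zQ) cardsU1 setD11.
Qed.

Lemma subset_toggle (A : {set T}) z Q : z \notin A ->
  (A \subset toggle z Q) = (A \subset Q).
Proof.
move=> zA; rewrite /toggle; case: ifP => zQ.
  by rewrite subsetD1 zA andbT.
apply/idP/idP => [AzQ|/subset_trans-> //]; last exact: subsetUr.
apply/subsetP => a aA; have := subsetP AzQ a aA; rewrite !inE.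
by case: eqP => // eaz; rewrite -eaz aA in zA.
Qed.

Lemma alt_sum_supset (A : {set T}) : A != setT ->
  \sum_(Q : {set T}) (-1) ^+ #|Q| * (A \subset Q)%:R = 0 :> int.
Proof.
rewrite -subTset => /subsetPn[z _ zA].
set s := (\sum_Q _); suff: s = - s by lia.
rewrite {1}/s (reindex_inj (can_inj (toggleK z))) -sumrN; apply: eq_bigr => Q _.
rewrite subset_toggle // card_toggle; case: ifP => zQ; last by rewrite exprS mulN1r mulNr.
have Q_gt0 : (0 < #|Q|)%N by apply/card_gt0P; exists z.
by rewrite -[in RHS](prednK Q_gt0) exprS mulN1r mulNr opprK.
Qed.

Lemma alt_sum_supset_comb (I : finType) (w : I -> int) (A : I -> {set T}) :
  (forall i, A i != setT) ->
  \sum_(Q : {set T}) (-1) ^+ #|Q| * \sum_i w i * (A i \subset Q)%:R = 0.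
Proof.
move=> AT; under eq_bigr => Q _ do rewrite mulr_sumr.
rewrite exchange_big big1 //= => i _.
under eq_bigr => Q _ do rewrite mulrCA.
by rewrite -mulr_sumr alt_sum_supset ?mulr0.
Qed.

Lemma natr_card (A : {pred T}) : #|A|%:R = \sum_x (x \in A)%:R :> int.
Proof.
by rewrite -sum1_card natr_sum big_mkcond; apply: eq_bigr => x _; case: (x \in A).
Qed.

Lemma alt_sum_card : (1 < #|T|)%N -> \sum_(Q : {set T}) (-1) ^+ #|Q| * #|Q|%:R = 0 :> int.
Proof.
move=> T_gt1; rewrite -[RHS](@alt_sum_supset_comb T (fun=> 1) set1).
  apply: eq_bigr => Q _; congr (_ * _).
  by rewrite natr_card; apply: eq_bigr => v _; rewrite sub1set mul1r.
by move=> v; apply: contraTneq T_gt1; rewrite -cardsT => <-; rewrite cards1.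
Qed.

End AlternatingSums.

Section BoundaryCount.
Local Open Scope ring_scope.
Variables (N : nat) (adj : rel 'I_N).

Definition alt_ncomp : int := \sum_(Q : {set 'I_N}) (-1) ^+ #|Q| * (ncomp adj Q)%:R.

Lemma alt_sum_nedges : (2 < N)%N ->
  \sum_(Q : {set 'I_N}) (-1) ^+ #|Q| * (nedges adj Q)%:R = 0 :> int.
Proof.
move=> N_gt2.
rewrite -[RHS](@alt_sum_supset_comb _ _
   (fun p : 'I_N * 'I_N => ((p.1 < p.2)%N && adj p.1 p.2)%:R : int) (fun p => [set p.1; p.2])).
  apply: eq_bigr => Q _; rewrite /nedges natr_card; congr (_ * _).
  apply: eq_bigr => p _; rewrite inE subUset !sub1set -natrM.
  by case: (p.1 < p.2)%N; case: (p.1 \in Q); case: (p.2 \in Q); case: (adj p.1 p.2).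
move=> p; apply: contraTneq N_gt2 => pT.
by rewrite -(card_ord N) -cardsT -pT cards2; case: (_ != _).
Qed.

Lemma Jbd_set0 : Jbd adj set0 = 0.
Proof.
rewrite /Jbd /betti1 /ncomp /nedges imset0 cards0.
have -> : [set p : 'I_N * 'I_N | [&& (p.1 < p.2)%N, p.1 \in set0, p.2 \in set0
                                     & adj p.1 p.2]] = set0.
  by apply/setP => p; rewrite !inE andbF.
by rewrite !cards0.
Qed.

Lemma calC_alt_ncomp : (2 < N)%N -> calC adj = - (2 * alt_ncomp).
Proof.
move=> N_gt2.
have -> : calC adj = - \sum_(Q : {set 'I_N}) (-1) ^+ #|Q| * Jbd adj Q.
  rewrite (bigD1 set0) //= Jbd_set0 mulr0 add0r -sumrN; apply: eq_bigr => Q Q0.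
  have Q_gt0 : (0 < #|Q|)%N by rewrite card_gt0.
  by rewrite -[in RHS](prednK Q_gt0) exprS mulN1r mulNr opprK.
congr (- _); rewrite mulr_sumr.
transitivity (\sum_(Q : {set 'I_N}) (2 * ((-1) ^+ #|Q| * (ncomp adj Q)%:R)
   + (-1) ^+ #|Q| * (nedges adj Q)%:R - (-1) ^+ #|Q| * #|Q|%:R) : int).
  by apply: eq_bigr => Q _; rewrite /Jbd /betti1; ring.
by rewrite sumrB big_split /= alt_sum_nedges // alt_sum_card ?card_ord ?addr0 ?subr0 //; lia.
Qed.

End BoundaryCount.

Definition add_edge (T : finType) (e : rel T) (x y : T) : rel T :=
  fun a b => [|| e a b, (a == x) && (b == y) | (a == y) && (b == x)].

Lemma add_edge_sym (T : finType) (e : rel T) x y :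
  symmetric e -> symmetric (add_edge e x y).
Proof.
move=> e_sym a b; rewrite /add_edge e_sym; congr (_ || _).
by rewrite orbC; congr (_ || _); apply: andbC.
Qed.

Lemma connect_invariant (T : finType) (e : rel T) (P : T -> Prop) x :
  P x -> (forall a b, P a -> e a b -> P b) -> forall y, connect e x y -> P y.
Proof.
move=> Px closedP y /connectP[p]; elim: p x Px => [|a p IHp] x Px /=; first by move=> _ ->.
by case/andP=> /(closedP _ _ Px) Pa; apply: IHp.
Qed.

Lemma card_imset_merge (T : finType) (P : {set T}) (a b c : T) :
  a \in P -> b \in P -> a != b -> c \notin P ->
  #|[set (if C \in [set a; b] then c else C) | C in P]| = #|P|.-1.
Proof.
move=> aP bP ab cP.
have -> : [set (if C \in [set a; b] then c else C) | C in P] = c |: (P :\: [set a; b]).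
  apply/setP => C; apply/imsetP/setU1P => [[D DP ->]|].
    by case: ifP => Dab; [left | right; rewrite inE Dab].
  case=> [->|]; first by exists a; rewrite ?set21.
  by rewrite inE => /andP[/negPf Cab CP]; exists C; rewrite ?Cab.
have abP : [set a; b] \subset P by rewrite subUset !sub1set aP bP.
have := subset_leq_card abP; rewrite cards2 ab.
rewrite cardsU1 in_setD (negPf cP) andbF cardsD (setIidPr abP) cards2 ab /=; lia.
Qed.

Definition component N (e : rel 'I_N) (Q : {set 'I_N}) (z : 'I_N) : {set 'I_N} :=
  [set w in Q | connect (induced_rel e Q) z w].

Lemma ncompE N (e : rel 'I_N) Q : ncomp e Q = #|component e Q @: Q|.
Proof. by []. Qed.

Lemma eq_ncomp N (e e' : rel 'I_N) Q :
  connect (induced_rel e Q) =2 connect (induced_rel e' Q) -> ncomp e Q = ncomp e' Q.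
Proof.
move=> ee'; rewrite !ncompE (@eq_imset _ _ _ (component e' Q)) // => z.
by apply/setP => w; rewrite !inE ee'.
Qed.

Section Components.
Variables (N : nat) (e : rel 'I_N) (Q : {set 'I_N}).
Hypothesis e_sym : symmetric e.
Let R := induced_rel e Q.

Lemma induced_rel_sym : symmetric R.
Proof. by move=> a b; rewrite /R /induced_rel e_sym andbCA. Qed.

Lemma mem_component z : z \in Q -> z \in component e Q z.
Proof. by move=> zQ; rewrite inE zQ connect0. Qed.

Lemma component_eq z w : w \in component e Q z -> component e Q w = component e Q z.
Proof.
rewrite inE => /andP[_ Rzw]; apply/setP => v; rewrite !inE.
by rewrite (same_connect (sym_connect_sym induced_rel_sym) Rzw).
Qed.

End Components.

Section AddEdge.
Variables (N : nat) (e : rel 'I_N) (Q : {set 'I_N}) (x y : 'I_N).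
Let R := induced_rel e Q.
Let R' := induced_rel (add_edge e x y) Q.

Lemma connect_add_edge z w : x \in Q -> y \in Q ->
  connect R' z w =
  [|| connect R z w, connect R z x && connect R y w | connect R z y && connect R x w].
Proof.
move=> xQ yQ.
have RR' : subrel (connect R) (connect R').
  apply: connect_sub => a b Rab; apply: connect1; move: Rab.
  by rewrite /R /R' /induced_rel /add_edge => /and3P[-> -> ->].
have R'xy : R' x y by rewrite /R' /induced_rel /add_edge xQ yQ !eqxx orbT.
have R'yx : R' y x by rewrite /R' /induced_rel /add_edge xQ yQ !eqxx !orbT.
apply/idP/idP; last first.
  case/or3P => [/RR' // | /andP[/RR' Rzx /RR' Ryw] | /andP[/RR' Rzy /RR' Rxw]].
  - exact: connect_trans Rzx (connect_trans (connect1 R'xy) Ryw).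
  - exact: connect_trans Rzy (connect_trans (connect1 R'yx) Rxw).
move: w; apply: connect_invariant => [|a b]; first by rewrite connect0.
rewrite /R' /induced_rel /add_edge => Pa /and3P[aQ bQ edge]; move: Pa.
case/or3P: edge => [eab | /andP[/eqP-> /eqP->] | /andP[/eqP-> /eqP->]].
- have Rab : R a b by rewrite /R /induced_rel aQ bQ.
  have ext c : connect R c a -> connect R c b.
    by move=> Rca; apply: connect_trans Rca (connect1 Rab).
  by case/or3P=> [/ext-> | /andP[-> /ext->] | /andP[-> /ext->]]; rewrite ?orbT.
- by case/or3P=> [-> | /andP[-> _] | /andP[-> _]]; rewrite ?connect0 ?orbT.
- by case/or3P=> [-> | /andP[-> _] | /andP[-> _]]; rewrite ?connect0 ?orbT.
Qed.

Hypothesis e_sym : symmetric e.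
Let R_sym : connect_sym R := sym_connect_sym (induced_rel_sym Q e_sym).

Lemma connect_add_edge_redundant :
  ~~ [&& x \in Q, y \in Q & ~~ connect R x y] -> connect R' =2 connect R.
Proof.
have [/andP[xQ yQ] | xyQ] := boolP ((x \in Q) && (y \in Q)); last first.
  move=> _; apply: eq_connect => a b; rewrite /R /R' /induced_rel /add_edge.
  apply/and3P/and3P => [[aQ bQ]|[-> -> ->] //].
  by case/or3P => [-> // | /andP[/eqP ax /eqP by_] | /andP[/eqP ay /eqP bx]];
    [rewrite -ax -by_ aQ bQ in xyQ | rewrite -ay -bx aQ bQ in xyQ].
rewrite xQ yQ negbK => Rxy z w; rewrite connect_add_edge //.
apply/or3P/idP => [[//| /andP[Rzx Ryw] | /andP[Rzy Rxw]] | Rzw]; last exact: Or31.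
  exact: connect_trans Rzx (connect_trans Rxy Ryw).
by apply: connect_trans Rzy (connect_trans _ Rxw); rewrite R_sym.
Qed.

Section Merge.
Hypotheses (xQ : x \in Q) (yQ : y \in Q) (nRxy : ~~ connect R x y).
Let Cx := component e Q x.
Let Cy := component e Q y.

Lemma component_add_edge z : z \in Q ->
  component (add_edge e x y) Q z =
  if component e Q z \in [set Cx; Cy] then Cx :|: Cy else component e Q z.
Proof.
move=> zQ; have nRyx : ~~ connect R y x by rewrite R_sym.
have [Rxz | nRxz] := boolP (connect R x z).
  have -> : component e Q z = Cx by apply: component_eq; rewrite // inE zQ.
  rewrite set21; apply/setP => w; rewrite inE connect_add_edge // !inE.
  by rewrite -!(same_connect R_sym Rxz) connect0 (negPf nRxy) /= orbF -andb_orr.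
have [Ryz | nRyz] := boolP (connect R y z).
  have -> : component e Q z = Cy by apply: component_eq; rewrite // inE zQ.
  rewrite set22; apply/setP => w; rewrite inE connect_add_edge // !inE.
  by rewrite -!(same_connect R_sym Ryz) connect0 (negPf nRyx) /= orbC -andb_orr.
rewrite ifF; last first.
  by apply/set2P => -[] comp_z; have := mem_component e zQ;
    rewrite comp_z inE ?(negPf nRxz) ?(negPf nRyz) andbF.
apply/setP => w; rewrite inE connect_add_edge // inE.
by rewrite (R_sym z x) (R_sym z y) (negPf nRxz) (negPf nRyz) /= !orbF.
Qed.
Lemma ncomp_add_edge_merge : (ncomp (add_edge e x y) Q).+1 = ncomp e Q.
Proof.
rewrite !ncompE (eq_in_imset component_add_edge).
rewrite (imset_comp (fun C => if C \in [set Cx; Cy] then Cx :|: Cy else C) (component e Q)).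
have CxP : Cx \in component e Q @: Q by apply: imset_f.
have CyP : Cy \in component e Q @: Q by apply: imset_f.
have Cx_neq_Cy : Cx != Cy.
  apply: contraNneq nRxy => Cxy; have := mem_component e yQ.
  by rewrite -/Cy -Cxy /Cx inE => /andP[].
have Cxy_notin : Cx :|: Cy \notin component e Q @: Q.
  apply/imsetP => -[z zQ CxyE].
  have /(component_eq e_sym) Ez : x \in component e Q z.
    by rewrite -CxyE in_setU mem_component.
  have : y \in Cx by rewrite /Cx Ez -CxyE in_setU (mem_component _ yQ) orbT.
  by rewrite inE (negPf nRxy) andbF.
by rewrite card_imset_merge // prednK // card_gt0; apply/set0Pn; exists Cx.
Qed.

End Merge.

Lemma ncomp_add_edge :
  ncomp (add_edge e x y) Q + [&& x \in Q, y \in Q & ~~ connect R x y] = ncomp e Q.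
Proof.
have [/and3P[xQ yQ nRxy] | redundant] := boolP [&& _, _ & _].
  by rewrite addn1 ncomp_add_edge_merge.
by rewrite addn0; apply: eq_ncomp; apply: connect_add_edge_redundant.
Qed.

End AddEdge.

Section AltNcompAddEdge.
Local Open Scope ring_scope.
Variables (N : nat) (e : rel 'I_N) (x y : 'I_N).
Hypothesis e_sym : symmetric e.

Lemma alt_ncomp_add_edge :
  alt_ncomp (add_edge e x y) = alt_ncomp e - \sum_(Q : {set 'I_N}) (-1) ^+ #|Q| *
    [&& x \in Q, y \in Q & ~~ connect (induced_rel e Q) x y]%:R.
Proof.
rewrite /alt_ncomp -sumrB; apply: eq_bigr => Q _.
by rewrite -mulrBr -(ncomp_add_edge Q x y e_sym) natrD addrK.
Qed.

Lemma alt_ncomp_add_bridge : [set x; y] != setT ->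
  (forall Q, ~~ connect (induced_rel e Q) x y) ->
  alt_ncomp (add_edge e x y) = alt_ncomp e.
Proof.
move=> xyT nRxy; rewrite alt_ncomp_add_edge -[RHS]subr0; congr (_ - _).
rewrite -[RHS](alt_sum_supset xyT); apply: eq_bigr => Q _.
by rewrite nRxy andbT subUset !sub1set.
Qed.

(* Here the component count drops by [{x, y} in Q] - [I in Q]. *)
Lemma alt_ncomp_close_path (I : {set 'I_N}) : x \in I -> y \in I -> I != setT ->
  (forall Q : {set 'I_N}, x \in Q -> y \in Q -> connect (induced_rel e Q) x y = (I \subset Q)) ->
  alt_ncomp (add_edge e x y) = alt_ncomp e.
Proof.
move=> xI yI IT RxyE.
have xyI : [set x; y] \subset I by rewrite subUset !sub1set xI yI.
have xyT : [set x; y] != setT.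
  by apply: contraNneq IT => xyT; rewrite eqEsubset subsetT -xyT xyI.
rewrite alt_ncomp_add_edge -[RHS]subr0; congr (_ - _).
rewrite -[RHS](subrr 0) -[X in X - _](alt_sum_supset xyT).
rewrite -[X in _ - X](alt_sum_supset IT) -sumrB.
apply: eq_bigr => Q _; rewrite -mulrBr subUset !sub1set; congr (_ * _).
have [xQ|xQ] := boolP (x \in Q); have [yQ|yQ] := boolP (y \in Q) => /=.
  by rewrite RxyE //; case: (I \subset Q).
all: suff /negPf-> : ~~ (I \subset Q) by rewrite subr0.
- by apply: contraNN yQ => /subsetP; apply.
- by apply: contraNN xQ => /subsetP; apply.
- by apply: contraNN xQ => /subsetP; apply.
Qed.

End AltNcompAddEdge.

Lemma eq_alt_ncomp N (e e' : rel 'I_N) : e =2 e' -> alt_ncomp e = alt_ncomp e'.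
Proof.
move=> ee'; apply: eq_bigr => Q _; congr (_ * _%:R)%R; apply: eq_ncomp.
by apply: eq_connect => a b; rewrite /induced_rel ee'.
Qed.

Section IntervalConnectivity.
Variables (N : nat) (e : rel 'I_N) (Q : {set 'I_N}).

Lemma connect_interval (lo : 'I_N) (hi : nat) :
  (forall a b : 'I_N, lo <= a -> b = a.+1 :> nat -> b <= hi -> e a b) ->
  (forall a : 'I_N, lo <= a <= hi -> a \in Q) ->
  forall b : 'I_N, lo <= b <= hi -> connect (induced_rel e Q) lo b.
Proof.
move=> e_succ Q_lohi [b bN]; elim: b bN => [|b IHb] bN /= lo_b_hi.
  by apply: eq_connect0; apply: val_inj => /=; lia.
have [lo_b | lo_gt_b] := leqP lo b; last first.
  by apply: eq_connect0; apply: val_inj => /=; lia.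
have bN' : b < N by lia.
apply: connect_trans (IHb bN' _) (connect1 _) => /=; first lia.
by rewrite /induced_rel !Q_lohi ?e_succ //=; lia.
Qed.

Lemma connect_below (j s t : 'I_N) : j \notin Q -> s < j ->
  (forall a b : 'I_N, a < j -> e a b -> b <= j) ->
  connect (induced_rel e Q) s t -> t < j.
Proof.
move=> jQ sj e_below; move: t; apply: connect_invariant => // a b aj /and3P[_ bQ eab].
rewrite ltn_neqAle (e_below a) // andbT; apply: contraNneq jQ => bj.
by rewrite (_ : j = b) //; apply: val_inj.
Qed.

End IntervalConnectivity.

Definition path_adj N (k : nat) : rel 'I_N :=
  fun a b => ((b == a.+1 :> nat) && (b <= k)) || ((a == b.+1 :> nat) && (a <= k)).

Lemma path_adj_sym N k : symmetric (@path_adj N k).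
Proof. by move=> a b; rewrite /path_adj orbC. Qed.

Lemma ncomp_path_adj0 N (Q : {set 'I_N}) : ncomp (path_adj 0) Q = #|Q|.
Proof.
have comp1 : {in Q, component (path_adj 0) Q =1 set1}.
  move=> z zQ; apply/setP => w; rewrite !inE; apply/andP/eqP => [[_]|->]; last first.
    by rewrite zQ connect0.
  by move: w; apply: connect_invariant => // a b -> /and3P[_ _]; rewrite /path_adj; lia.
by rewrite ncompE (eq_in_imset comp1) card_imset //; apply: set1_inj.
Qed.

Lemma alt_ncomp_path N k : (2 < N)%N -> k < N -> alt_ncomp (@path_adj N k) = 0%R.
Proof.
move=> N_gt2; elim: k => [|k IHk] kN.
  rewrite /alt_ncomp; under eq_bigr => Q _ do rewrite ncomp_path_adj0.
  by rewrite alt_sum_card // card_ord; lia.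
have kN' : k < N by lia.
pose x := Ordinal kN'; pose y := Ordinal kN.
have -> : alt_ncomp (@path_adj N k.+1) = alt_ncomp (add_edge (path_adj k) x y).
  by apply: eq_alt_ncomp => a b; rewrite /add_edge /path_adj -!val_eqE /=; apply/idP/idP; lia.
rewrite alt_ncomp_add_bridge ?IHk //; first exact: path_adj_sym.
  apply: contraTneq N_gt2 => xyT.
  by rewrite -(card_ord N) -cardsT -xyT cards2; case: (_ != _).
move=> Q; apply/negP => Rxy; suff : (y : nat) <= k by rewrite /= ltnn.
apply: (connect_invariant (P := fun a : 'I_N => (a : nat) <= k) _ _ Rxy) => //= a b ak.
by case/and3P=> _ _; rewrite /path_adj; lia.
Qed.

Section ChordedCycle.
Variables (N : nat) (n m : 'I_N.+1).
Hypothesis n_lt_m : n.+1 < m.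
Let P : rel 'I_N.+1 := path_adj N.
Let Pc : rel 'I_N.+1 := add_edge P n m.

Lemma connect_path (Q : {set 'I_N.+1}) (a b : 'I_N.+1) : a <= b -> a \in Q -> b \in Q ->
  connect (induced_rel P Q) a b = ([set j : 'I_N.+1 | a <= j <= b] \subset Q).
Proof.
move=> ab aQ bQ; apply/idP/idP => [Rab | abQ].
  apply/subsetP => j; rewrite inE => /andP[aj jb]; apply: contraTT Rab => jQ.
  have a_lt_j : a < j by rewrite ltn_neqAle aj andbT; apply: contraNneq jQ => /val_inj <-.
  apply/negP => Rab.
  have : b < j by apply: (connect_below jQ a_lt_j _ Rab) => c d; rewrite /P /path_adj; lia.
  by rewrite ltnNge jb.
apply: (connect_interval (hi := b)) => [c d _ dc _ | c cab |]; last by rewrite leqnn ab.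
- by rewrite /P /path_adj; have := ltn_ord d; lia.
- by apply: (subsetP abQ); rewrite inE.
Qed.

Lemma connect_path_chord (Q : {set 'I_N.+1}) : ord0 \in Q -> ord_max \in Q ->
  connect (induced_rel Pc Q) ord0 ord_max =
  ([set j : 'I_N.+1 | (j <= n) || (m <= j)] \subset Q).
Proof.
move=> Q0 QN; apply/idP/idP => [R0N | outQ].
  apply/subsetP => j; rewrite inE => j_out; apply: contraTT R0N => jQ; apply/negP => R0N.
  have j_gt0 : @ord0 N < j.
    by rewrite lt0n; apply: contraNneq jQ => j0; rewrite (_ : j = ord0) //; apply: val_inj.
  have : (@ord_max N : nat) < j.
    apply: (connect_below jQ j_gt0 _ R0N) => c d.
    by rewrite /Pc /add_edge /P /path_adj -!val_eqE /=; have := ltn_ord d; lia.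
  by rewrite ltnNge -ltnS ltn_ord.
have outQ_in (j : 'I_N.+1) : (j <= n) || (m <= j) -> j \in Q.
  by move=> j_out; apply: (subsetP outQ); rewrite inE.
have Pc_succ (c d : 'I_N.+1) : d = c.+1 :> nat -> Pc c d.
  by move=> dc; rewrite /Pc /add_edge /P /path_adj; have := ltn_ord d; lia.
have R0n : connect (induced_rel Pc Q) ord0 n.
  apply: (connect_interval (hi := n)) => [c d _ dc _ | c /andP[_ cn] |]; last by rewrite leqnn.
    exact: Pc_succ.
  by rewrite outQ_in ?cn.
have RmN : connect (induced_rel Pc Q) m ord_max.
  apply: (connect_interval (hi := N)) => [c d _ dc _ | c /andP[mc _] |].
  - exact: Pc_succ.
  - by rewrite outQ_in // mc orbT.
  - by rewrite leqnn -ltnS ltn_ord.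
apply: connect_trans R0n (connect_trans (connect1 _) RmN).
by rewrite /induced_rel !outQ_in ?leqnn ?orbT //= /Pc /add_edge !eqxx orbT.
Qed.


Lemma alt_ncomp_chorded_cycle : (0 < n) || (m < N) ->
  alt_ncomp (add_edge Pc ord0 ord_max) = 0%R.
Proof.
move=> chord_proper; have P_sym : symmetric P by apply: path_adj_sym.
rewrite (alt_ncomp_close_path (add_edge_sym n m P_sym)
           (I := [set j : 'I_N.+1 | (j <= n) || (m <= j)])); first last.
- by move=> Q Q0 QN; rewrite connect_path_chord.
- apply/eqP => /setP/(_ (inord n.+1)); rewrite !inE inordK; have := ltn_ord m; lia.
- by rewrite inE /=; have := ltn_ord m; lia.
- by rewrite inE leq0n.
rewrite (alt_ncomp_close_path P_sym (I := [set j : 'I_N.+1 | n <= j <= m])); first last.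
- by move=> Q nQ mQ; rewrite connect_path // ltnW // ltnW.
- by apply/eqP => /setP IT; move: (IT ord0) (IT ord_max); rewrite !inE /=; lia.
- by rewrite inE leqnn andbT; lia.
- by rewrite inE leqnn; lia.
by apply: alt_ncomp_path => //; have := ltn_ord m; lia.
Qed.

End ChordedCycle.

Lemma cycle_adjE N : @cycle_adj N.+1 =2 add_edge (path_adj N) ord0 ord_max.
Proof.
have succ_mod (c : 'I_N.+1) : c.+1 %% N.+1 = if c == N :> nat then 0 else c.+1.
  case: eqP => [->|cN]; first by rewrite modnn.
  by rewrite modn_small //; have := ltn_ord c; lia.
move=> a b; rewrite /cycle_adj /add_edge /path_adj -!val_eqE /= !succ_mod.
by have := ltn_ord a; have := ltn_ord b; do 2 case: ifP; move=> *; apply/idP/idP; lia.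
Qed.

Lemma chord_adjE N (n m : 'I_N.+1) :
  chord_adj n m =2 add_edge (add_edge (path_adj N) n m) ord0 ord_max.
Proof. by move=> a b; rewrite /chord_adj cycle_adjE /add_edge orbAC. Qed.

Lemma chord_adjC N (n m : 'I_N) : chord_adj n m =2 chord_adj m n.
Proof. by move=> a b; rewrite /chord_adj; congr (_ || _); apply: orbC. Qed.

Lemma cycle_adj_sym N : symmetric (@cycle_adj N).
Proof. by move=> a b; rewrite /cycle_adj orbC. Qed.

Lemma alt_ncomp_chord N (n m : 'I_N.+1) : n < m -> ~~ cycle_adj n m ->
  alt_ncomp (chord_adj n m) = 0%R.
Proof.
move=> n_lt_m; rewrite cycle_adjE /add_edge /path_adj -!val_eqE /= => nonadj.
rewrite (eq_alt_ncomp (chord_adjE n m)) alt_ncomp_chorded_cycle //; have := ltn_ord m; lia.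
Qed.

Theorem mainTheorem9 (N : nat) (n m : 'I_N) :
  (4 <= N)%N -> n != m -> ~~ cycle_adj n m ->
  calC (chord_adj n m) = 0%R.
Proof.
move=> N_ge4 n_neq_m nonadj; rewrite calC_alt_ncomp; last by lia.
case: N n m N_ge4 n_neq_m nonadj => [[] //|N] n m _.
rewrite neq_ltn => /orP[n_lt_m | m_lt_n] nonadj.
  by rewrite alt_ncomp_chord // mulr0 oppr0.
rewrite cycle_adj_sym in nonadj.
by rewrite (eq_alt_ncomp (chord_adjC n m)) alt_ncomp_chord // mulr0 oppr0.
Qed.
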